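(* Let $\mu>0$ and let $X$ have the skew-symmetric-Laplace-uniform density $g$ with parameter $\mu$ (defined in the context), with reliability function $R(x)=P(X>x)$. Then the hazard rate $h(x)=g(x)/R(x)$ is $$h(x)=\begin{cases}0 & x<-\mu,\\ \left[-1+\dfrac{1+(2\mu-e^{-\mu})e^{-x}}{x+\mu}\right]^{-1} & -\mu\le x<0,\\ \left[1+\dfrac{1-e^{x-\mu}}{x+\mu}\right]^{-1} & 0\le x<\mu,\\ 1 & x\ge\mu,\end{cases}$$ (where at $x=-\mu$ the bracketed expression is interpreted as $+\infty$, so $h(-\mu)=0$). Moreover, for every $\mu\in\mathbb{R}\setminus\{0\}$ (positive or negative), the hazard rate of $SSLUD(\mu)$ is a nondecreasing function of $x$ on the set $\{x: R(x)>0\}$; that is, $SSLUD(\mu)$ is an increasing failure rate (IFR) distribution.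
   Context: For $\mu\in\mathbb{R}\setminus\{0\}$, the skew-symmetric-Laplace-uniform distribution $SSLUD(\mu)$ is the distribution on $\mathbb{R}$ with density $$g(x)=\begin{cases} 0 & \text{if } x/\mu<-1,\\ e^{-|x|}\left(\dfrac{x}{2\mu}+\dfrac12\right) & \text{if } -1\le x/\mu<1,\\ e^{-|x|} & \text{if } x/\mu\ge 1.\end{cases}$$ The hazard rate is $h(x)=g(x)/R(x)$ with $R(x)=1-G(x)$, $G$ the cdf. *)

From Stdlib Require Import Reals Lra.
From Coquelicot Require Import Coquelicot.
Open Scope R_scope.

Definition sslud_density (mu x : R) : R :=
  if Rlt_dec (x / mu) (-1) then 0
  else if Rlt_dec (x / mu) 1 then exp (- Rabs x) * (x / (2 * mu) + 1 / 2)
  else exp (- Rabs x).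

Definition sslud_reliability (mu x : R) : R :=
  RInt_gen (sslud_density mu) (at_point x) (Rbar_locally p_infty).

Definition sslud_hazard (mu x : R) : R :=
  sslud_density mu x / sslud_reliability mu x.

From Stdlib Require Import Reals Lra.
From Coquelicot Require Import Coquelicot.
Open Scope R_scope.

(* The density is exp(-|x|) times an affine function on [-|mu|, 0] and on
   [0, |mu|], and exp(-|x|) or 0 outside, so R has a closed form on each piece,
   obtained by integrating back from +oo.  On the central pieces h is the
   reciprocal of an explicit Mills ratio R/g, which is nonincreasing because the
   sign of its derivative reduces to the Taylor bound (1 - s) e^s <= 1; outside
   them h is 0, 1 or 1/(e^-x - 1).  Monotonicity on each closed piece then glues
   to monotonicity on {R > 0}. *)

Lemma is_RInt_gen_segment (g f T : R -> R) (a b : R) : a <= b ->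
  (forall t, a <= t <= b -> is_derive T t (- f t)) ->
  (forall t, a <= t <= b -> continuous f t) ->
  (forall t, a < t < b -> g t = f t) ->
  is_RInt_gen g (at_point a) (at_point b) (T a - T b).
Proof.
  intros Hab HT Hf Hg.
  apply is_RInt_gen_at_point.
  apply is_RInt_ext with f.
  { rewrite Rmin_left, Rmax_right by lra. intros t Ht. symmetry. now apply Hg. }
  replace (T a - T b) with (minus (- T b) (- T a)) by (unfold minus, plus, opp; simpl; ring).
  apply (is_RInt_derive (V := R_CompleteNormedModule) (fun t => - T t));
    rewrite Rmin_left, Rmax_right by lra; intros t Ht.
  - apply (is_derive_opp T t (- f t)) in HT; [| exact Ht].
    now rewrite Ropp_involutive in HT.
  - now apply Hf.
Qed.

Lemma is_RInt_gen_tail (g f T : R -> R) (a : R) :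
  (forall t, is_derive T t (- f t)) -> (forall t, continuous f t) ->
  (forall t, a < t -> g t = f t) ->
  filterlim T (Rbar_locally p_infty) (locally 0) ->
  is_RInt_gen g (at_point a) (Rbar_locally p_infty) (T a).
Proof.
  intros HT Hf Hg Hlim.
  assert (HT' : forall t, is_derive (fun s => - T s) t (f t)).
  { intros t. pose proof (is_derive_opp T t (- f t) (HT t)) as H.
    now rewrite Ropp_involutive in H. }
  assert (Hbeyond : forall P : R -> R -> Prop, (forall b, a < b -> P a b) ->
            filter_prod (at_point a) (Rbar_locally p_infty) (fun ab => P (fst ab) (snd ab))).
  { intros P HP. apply Filter_prod with (fun s => s = a) (fun b => a < b).
    - reflexivity.
    - now exists a.
    - intros s b -> Hb. now apply HP. }
  assert (HD : forall t, Derive (fun s => - T s) t = f t).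
  { intros t. now apply is_derive_unique. }
  replace (T a) with (0 - - T a) by ring.
  apply is_RInt_gen_ext with (Derive (fun s => - T s)).
  { apply (Hbeyond (fun a' b => forall t, Rmin a' b < t < Rmax a' b -> _ = _)).
    intros b Hb t Ht. rewrite Rmin_left, Rmax_right in Ht by lra.
    rewrite HD. symmetry. apply Hg. lra. }
  apply is_RInt_gen_Derive.
  - apply (Hbeyond (fun a' b => forall t, Rmin a' b <= t <= Rmax a' b -> ex_derive _ t)).
    intros b _ t _. eexists. apply HT'.
  - apply (Hbeyond (fun a' b => forall t, Rmin a' b <= t <= Rmax a' b -> continuous _ t)).
    intros b _ t _. apply continuous_ext with f; [intros; now rewrite HD | apply Hf].
  - intros P HP. unfold filtermap, at_point. exact (locally_singleton _ _ HP).
  - replace (locally 0) with (locally (opp 0 : R)) by (f_equal; unfold opp; simpl; ring).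
    exact (filterlim_comp _ _ _ T opp _ _ _ Hlim (filterlim_opp 0)).
Qed.

Lemma is_RInt_gen_split (g : R -> R) (a b l1 l2 l : R) :
  is_RInt_gen g (at_point a) (at_point b) l1 ->
  is_RInt_gen g (at_point b) (Rbar_locally p_infty) l2 -> l1 + l2 = l ->
  is_RInt_gen g (at_point a) (Rbar_locally p_infty) l.
Proof. intros H1 H2 <-. exact (is_RInt_gen_Chasles g b l1 l2 H1 H2). Qed.

Lemma filterlim_exp_opp_p_infty :
  filterlim (fun t => exp (- t)) (Rbar_locally p_infty) (locally 0).
Proof.
  apply (is_lim_comp exp Ropp p_infty 0 m_infty).
  - exact is_lim_exp_m.
  - apply (is_lim_opp (fun t => t) p_infty p_infty), is_lim_id.
  - exists 0. intros; discriminate.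
Qed.

Lemma continuous_of_ex_derive (f : R -> R) (t : R) : ex_derive f t -> continuous f t.
Proof. apply (ex_derive_continuous (K := R_AbsRing) (V := R_NormedModule)). Qed.

Lemma antitone_of_derive_nonpos (f f' : R -> R) (x y : R) : x <= y ->
  (forall t, x <= t <= y -> is_derive f t (f' t)) ->
  (forall t, x <= t <= y -> f' t <= 0) -> f y <= f x.
Proof.
  intros Hxy Hf Hf'.
  destruct (MVT_gen f x y f') as (c & Hc & Hfc);
    rewrite ?Rmin_left, ?Rmax_right in * by lra.
  - intros t Ht. apply Hf. lra.
  - intros t Ht. apply continuity_pt_filterlim, continuous_of_ex_derive.
    eexists. now apply Hf.
  - assert (Hc' := Hf' c Hc). nra.
Qed.

Lemma one_sub_mul_exp_le (s : R) : (1 - s) * exp s <= 1.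
Proof.
  assert (H := exp_ineq1_le (- s)). assert (E := exp_pos s).
  replace 1 with (exp (- s) * exp s) at 2 by (rewrite exp_Ropp; field; lra).
  nra.
Qed.

Lemma one_sub_mul_exp_lt (s : R) : s <> 0 -> (1 - s) * exp s < 1.
Proof.
  intros Hs. assert (H := exp_ineq1 (- s) ltac:(lra)). assert (E := exp_pos s).
  replace 1 with (exp (- s) * exp s) at 2 by (rewrite exp_Ropp; field; lra).
  nra.
Qed.

Definition nondecreasing_on (S : R -> Prop) (f : R -> R) : Prop :=
  forall x y, S x -> S y -> x <= y -> f x <= f y.

Lemma nondecreasing_on_glue (S : R -> Prop) (f : R -> R) (b : R) : S b ->
  nondecreasing_on (fun t => S t /\ t <= b) f ->
  nondecreasing_on (fun t => S t /\ b <= t) f ->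
  nondecreasing_on S f.
Proof.
  intros Sb Hl Hr x y Sx Sy Hxy.
  destruct (Rle_dec y b); [apply Hl; try split; auto; lra|].
  destruct (Rle_dec b x); [apply Hr; try split; auto; lra|].
  apply Rle_trans with (f b); [apply Hl | apply Hr]; try split; auto; lra.
Qed.

Lemma nondecreasing_on_subset (S S' : R -> Prop) (f : R -> R) :
  (forall t, S t -> S' t) -> nondecreasing_on S' f -> nondecreasing_on S f.
Proof. intros HS Hf x y Sx Sy. apply Hf; auto. Qed.

Lemma Rdiv_eq_opp_div_opp (x mu : R) : x / mu = - (x / - mu).
Proof. now rewrite Rdiv_opp_r, Ropp_involutive. Qed.

Lemma sslud_density_nonneg (mu x : R) : 0 <= sslud_density mu x.
Proof.
  unfold sslud_density. assert (E := exp_pos (- Rabs x)).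
  destruct (Rlt_dec (x / mu) (-1)); [lra|].
  destruct (Rlt_dec (x / mu) 1); [|lra].
  apply Rmult_le_pos; [lra|].
  replace (x / (2 * mu)) with (x / mu / 2) by (unfold Rdiv; rewrite Rinv_mult; ring).
  lra.
Qed.

Lemma sslud_density_mid (mu x : R) : mu <> 0 -> Rabs x <= Rabs mu ->
  sslud_density mu x = exp (- Rabs x) * ((x + mu) / (2 * mu)).
Proof.
  intros Hmu Hx.
  assert (Hq : -1 <= x / mu <= 1).
  { apply Rabs_le_between. rewrite Rabs_div by exact Hmu.
    apply Rle_div_l; [now apply Rabs_pos_lt | lra]. }
  unfold sslud_density.
  destruct (Rlt_dec (x / mu) (-1)); [lra|].
  destruct (Rlt_dec (x / mu) 1).
  - f_equal. field. exact Hmu.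
  - assert (Hxmu : x = mu) by (replace x with (x / mu * mu) by (field; exact Hmu); nra).
    subst x. field. exact Hmu.
Qed.

Lemma sslud_density_above_pos (mu x : R) : 0 < mu -> mu <= x ->
  sslud_density mu x = exp (- x).
Proof.
  intros Hmu Hx. unfold sslud_density.
  assert (Hq : 1 <= x / mu) by (apply Rle_div_r; lra).
  destruct (Rlt_dec (x / mu) (-1)); [lra|].
  destruct (Rlt_dec (x / mu) 1); [lra|].
  now rewrite Rabs_pos_eq by lra.
Qed.

Lemma sslud_density_below_pos (mu x : R) : 0 < mu -> x <= - mu ->
  sslud_density mu x = 0.
Proof.
  intros Hmu Hx. destruct (Rle_lt_or_eq _ _ Hx) as [Hlt | ->].
  - unfold sslud_density.
    assert (Hq : x / mu < -1) by (apply Rlt_div_l; lra).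
    now destruct (Rlt_dec (x / mu) (-1)).
  - rewrite sslud_density_mid by (rewrite ?Rabs_Ropp; lra).
    replace (- mu + mu) with 0 by ring. unfold Rdiv. ring.
Qed.

Lemma sslud_density_above_neg (mu x : R) : mu < 0 -> - mu < x ->
  sslud_density mu x = 0.
Proof.
  intros Hmu Hx. unfold sslud_density.
  assert (Hq : x / mu < -1).
  { rewrite Rdiv_eq_opp_div_opp. enough (1 < x / - mu) by lra. apply Rlt_div_r; lra. }
  now destruct (Rlt_dec (x / mu) (-1)).
Qed.

Lemma sslud_density_below_neg (mu x : R) : mu < 0 -> x <= mu ->
  sslud_density mu x = exp x.
Proof.
  intros Hmu Hx. unfold sslud_density.
  assert (Hq : 1 <= x / mu).
  { rewrite Rdiv_eq_opp_div_opp. enough (x / - mu <= -1) by lra. apply Rle_div_l; lra. }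
  destruct (Rlt_dec (x / mu) (-1)); [lra|].
  destruct (Rlt_dec (x / mu) 1); [lra|].
  now rewrite Rabs_left, Ropp_involutive by lra.
Qed.

Lemma add_mul_pos_of_abs_le (mu x : R) : Rabs x <= Rabs mu -> x <> - mu ->
  0 < (x + mu) * mu.
Proof.
  intros Hx Hxm. apply Rabs_le_between in Hx.
  destruct (Rcase_abs mu) as [Hmu | Hmu];
    [rewrite Rabs_left in Hx by lra | rewrite Rabs_pos_eq in Hx by lra]; nra.
Qed.

Lemma sslud_density_mid_pos (mu x : R) : Rabs x <= Rabs mu -> x <> - mu ->
  0 < sslud_density mu x.
Proof.
  intros Hx Hxm. assert (Hpos := add_mul_pos_of_abs_le mu x Hx Hxm).
  assert (Hmu : mu <> 0) by (intros ->; lra).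
  rewrite sslud_density_mid by assumption.
  apply Rmult_lt_0_compat; [apply exp_pos|].
  replace ((x + mu) / (2 * mu)) with ((x + mu) * mu / (2 * (mu * mu))) by (field; exact Hmu).
  apply Rdiv_lt_0_compat; [lra | nra].
Qed.

Definition sslud_rel_left (mu x : R) : R :=
  (2 * mu - exp (- Rabs mu) - exp x * (x + mu - 1)) / (2 * mu).

Definition sslud_rel_right (mu x : R) : R :=
  (exp (- x) * (x + mu + 1) - exp (- Rabs mu)) / (2 * mu).

Lemma sslud_reliability_of_is_RInt_gen (mu x l : R) :
  is_RInt_gen (sslud_density mu) (at_point x) (Rbar_locally p_infty) l ->
  sslud_reliability mu x = l.
Proof. apply (is_RInt_gen_unique (V := R_CompleteNormedModule)). Qed.

Lemma is_RInt_gen_sslud_above_pos (mu x : R) : 0 < mu -> mu <= x ->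
  is_RInt_gen (sslud_density mu) (at_point x) (Rbar_locally p_infty) (exp (- x)).
Proof.
  intros Hmu Hx.
  apply (is_RInt_gen_tail _ (fun t => exp (- t)) (fun t => exp (- t))).
  - intros t. auto_derive; [auto | ring].
  - intros t. apply continuous_of_ex_derive. auto_derive. auto.
  - intros t Ht. apply sslud_density_above_pos; lra.
  - exact filterlim_exp_opp_p_infty.
Qed.

Lemma is_RInt_gen_sslud_above_neg (mu x : R) : mu < 0 -> - mu <= x ->
  is_RInt_gen (sslud_density mu) (at_point x) (Rbar_locally p_infty) 0.
Proof.
  intros Hmu Hx.
  apply (is_RInt_gen_tail _ (fun _ => 0) (fun _ => 0)).
  - intros t. auto_derive; [auto | ring].
  - intros t. apply continuous_const.
  - intros t Ht. apply sslud_density_above_neg; lra.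
  - apply filterlim_const.
Qed.

Lemma is_RInt_gen_sslud_right (mu x : R) : mu <> 0 -> 0 <= x <= Rabs mu ->
  is_RInt_gen (sslud_density mu) (at_point x) (Rbar_locally p_infty)
    (sslud_rel_right mu x).
Proof.
  intros Hmu Hx.
  apply (is_RInt_gen_split _ x (Rabs mu)
           (sslud_rel_right mu x - sslud_rel_right mu (Rabs mu))
           (sslud_rel_right mu (Rabs mu))); [| | ring].
  - apply (is_RInt_gen_segment _ (fun t => exp (- t) * ((t + mu) / (2 * mu)))); [lra | | |].
    + intros t _. unfold sslud_rel_right. auto_derive; [auto | field; exact Hmu].
    + intros t _. apply continuous_of_ex_derive. auto_derive. auto.
    + intros t Ht. assert (Habs : Rabs t <= Rabs mu) by (rewrite Rabs_pos_eq; lra).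
      now rewrite sslud_density_mid, Rabs_pos_eq by (auto; lra).
  - destruct (Rle_lt_dec 0 mu) as [Hpos | Hneg].
    + rewrite Rabs_pos_eq by lra.
      replace (sslud_rel_right mu mu) with (exp (- mu))
        by (unfold sslud_rel_right; rewrite Rabs_pos_eq by lra; field; exact Hmu).
      apply is_RInt_gen_sslud_above_pos; lra.
    + rewrite Rabs_left by lra.
      replace (sslud_rel_right mu (- mu)) with 0
        by (unfold sslud_rel_right; rewrite Rabs_left, Ropp_involutive by lra; field; lra).
      apply is_RInt_gen_sslud_above_neg; lra.
Qed.

Lemma is_RInt_gen_sslud_left (mu x : R) : mu <> 0 -> - Rabs mu <= x <= 0 ->
  is_RInt_gen (sslud_density mu) (at_point x) (Rbar_locally p_infty)
    (sslud_rel_left mu x).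
Proof.
  intros Hmu Hx.
  apply (is_RInt_gen_split _ x 0 (sslud_rel_left mu x - sslud_rel_left mu 0)
           (sslud_rel_right mu 0)).
  - apply (is_RInt_gen_segment _ (fun t => exp t * ((t + mu) / (2 * mu)))); [lra | | |].
    + intros t _. unfold sslud_rel_left. auto_derive; [auto | field; exact Hmu].
    + intros t _. apply continuous_of_ex_derive. auto_derive. auto.
    + intros t Ht. assert (Habs : Rabs t <= Rabs mu) by (rewrite Rabs_left; lra).
      now rewrite sslud_density_mid, Rabs_left, Ropp_involutive by (auto; lra).
  - apply is_RInt_gen_sslud_right; [exact Hmu | split; [lra | apply Rabs_pos]].
  - unfold sslud_rel_left, sslud_rel_right. rewrite Ropp_0, exp_0. field. exact Hmu.
Qed.

Lemma sslud_reliability_below_neg (mu x : R) : mu < 0 -> x <= mu ->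
  sslud_reliability mu x = 1 - exp x.
Proof.
  intros Hmu Hx. apply sslud_reliability_of_is_RInt_gen.
  apply (is_RInt_gen_split _ x mu (exp mu - exp x) (sslud_rel_left mu mu)).
  - replace (exp mu - exp x) with ((1 - exp x) - (1 - exp mu)) by ring.
    apply (is_RInt_gen_segment _ exp (fun t => 1 - exp t)); [lra | | |].
    + intros t _. auto_derive; [auto | ring].
    + intros t _. apply continuous_of_ex_derive. auto_derive. auto.
    + intros t Ht. apply sslud_density_below_neg; lra.
  - apply is_RInt_gen_sslud_left; [lra | rewrite Rabs_left; lra].
  - unfold sslud_rel_left. rewrite Rabs_left, Ropp_involutive by lra. field. lra.
Qed.

Lemma sslud_reliability_zero_pos (mu : R) : mu <> 0 -> 0 < sslud_reliability mu 0.
Proof.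
  intros Hmu.
  rewrite (sslud_reliability_of_is_RInt_gen _ _ _
             (is_RInt_gen_sslud_right mu 0 Hmu (conj (Rle_refl 0) (Rabs_pos mu)))).
  unfold sslud_rel_right. rewrite Ropp_0, exp_0.
  destruct (Rcase_abs mu) as [Hneg | Hpos].
  - rewrite Rabs_left, Ropp_involutive by lra.
    assert (H := exp_ineq1 mu Hmu).
    replace ((1 * (0 + mu + 1) - exp mu) / (2 * mu))
      with ((exp mu - (1 + mu)) / (2 * - mu)) by (field; exact Hmu).
    apply Rdiv_lt_0_compat; lra.
  - rewrite Rabs_pos_eq by lra.
    assert (H := exp_increasing (- mu) 0 ltac:(lra)). rewrite exp_0 in H.
    apply Rdiv_lt_0_compat; lra.
Qed.

Lemma sslud_hazard_nonneg (mu x : R) : 0 < sslud_reliability mu x ->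
  0 <= sslud_hazard mu x.
Proof. intros HR. apply Rdiv_le_0_compat; [apply sslud_density_nonneg | exact HR]. Qed.

Lemma sslud_hazard_below_pos (mu x : R) : 0 < mu -> x <= - mu -> sslud_hazard mu x = 0.
Proof.
  intros Hmu Hx. unfold sslud_hazard. rewrite sslud_density_below_pos by assumption.
  unfold Rdiv. ring.
Qed.

Lemma sslud_hazard_above_pos (mu x : R) : 0 < mu -> mu <= x -> sslud_hazard mu x = 1.
Proof.
  intros Hmu Hx. unfold sslud_hazard.
  rewrite sslud_density_above_pos, (sslud_reliability_of_is_RInt_gen _ _ _
    (is_RInt_gen_sslud_above_pos mu x Hmu Hx)) by assumption.
  field. apply Rgt_not_eq, exp_pos.
Qed.

Lemma sslud_hazard_below_neg (mu x : R) : mu < 0 -> x <= mu ->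
  sslud_hazard mu x = / (exp (- x) - 1).
Proof.
  intros Hmu Hx. unfold sslud_hazard.
  rewrite sslud_density_below_neg, sslud_reliability_below_neg by assumption.
  replace (exp (- x) - 1) with ((1 - exp x) / exp x)
    by (rewrite exp_Ropp; field; apply Rgt_not_eq, exp_pos).
  now rewrite Rinv_div.
Qed.

(* The inverse hazard (Mills ratio) R / g on [-|mu|, 0] and on [0, |mu|]; with
   |mu| these closed forms hold for both signs of mu. *)
Definition sslud_mills_left (mu x : R) : R :=
  -1 + (1 + (2 * mu - exp (- Rabs mu)) * exp (- x)) / (x + mu).

Definition sslud_mills_right (mu x : R) : R :=
  1 + (1 - exp (x - Rabs mu)) / (x + mu).

Lemma sslud_mills_left_eq (mu x : R) : mu <> 0 -> - Rabs mu <= x <= 0 -> x <> - mu ->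
  sslud_mills_left mu x = sslud_reliability mu x / sslud_density mu x.
Proof.
  intros Hmu Hx Hxm.
  rewrite (sslud_reliability_of_is_RInt_gen _ _ _ (is_RInt_gen_sslud_left mu x Hmu Hx)).
  assert (Habs : Rabs x <= Rabs mu) by (rewrite Rabs_left1; lra).
  rewrite sslud_density_mid, Rabs_left1, Ropp_involutive by (auto; lra).
  unfold sslud_mills_left, sslud_rel_left. rewrite (exp_Ropp x).
  field. repeat split; first [lra | apply Rgt_not_eq, exp_pos].
Qed.

Lemma sslud_mills_right_eq (mu x : R) : mu <> 0 -> 0 <= x <= Rabs mu -> x <> - mu ->
  sslud_mills_right mu x = sslud_reliability mu x / sslud_density mu x.
Proof.
  intros Hmu Hx Hxm.
  rewrite (sslud_reliability_of_is_RInt_gen _ _ _ (is_RInt_gen_sslud_right mu x Hmu Hx)).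
  assert (Habs : Rabs x <= Rabs mu) by (rewrite Rabs_pos_eq; lra).
  rewrite sslud_density_mid, Rabs_pos_eq by (auto; lra).
  unfold sslud_mills_right, sslud_rel_right.
  unfold Rminus. rewrite exp_plus, (exp_Ropp x).
  field. repeat split; first [lra | apply Rgt_not_eq, exp_pos].
Qed.

Lemma sslud_hazard_left (mu x : R) : mu <> 0 -> - Rabs mu <= x <= 0 -> x <> - mu ->
  sslud_hazard mu x = / sslud_mills_left mu x.
Proof.
  intros. unfold sslud_hazard. now rewrite sslud_mills_left_eq, Rinv_div.
Qed.

Lemma sslud_hazard_right (mu x : R) : mu <> 0 -> 0 <= x <= Rabs mu -> x <> - mu ->
  sslud_hazard mu x = / sslud_mills_right mu x.
Proof.
  intros. unfold sslud_hazard. now rewrite sslud_mills_right_eq, Rinv_div.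
Qed.

Lemma sslud_mills_left_pos (mu x : R) : mu <> 0 -> - Rabs mu <= x <= 0 -> x <> - mu ->
  0 < sslud_reliability mu x -> 0 < sslud_mills_left mu x.
Proof.
  intros Hmu Hx Hxm HR. rewrite sslud_mills_left_eq by assumption.
  apply Rdiv_lt_0_compat; [exact HR |].
  apply sslud_density_mid_pos; [rewrite Rabs_left1 by lra; lra | exact Hxm].
Qed.

Lemma sslud_mills_right_pos (mu x : R) : mu <> 0 -> 0 <= x <= Rabs mu -> x <> - mu ->
  0 < sslud_reliability mu x -> 0 < sslud_mills_right mu x.
Proof.
  intros Hmu Hx Hxm HR. rewrite sslud_mills_right_eq by assumption.
  apply Rdiv_lt_0_compat; [exact HR |].
  apply sslud_density_mid_pos; [rewrite Rabs_pos_eq by lra; lra | exact Hxm].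
Qed.

Lemma sslud_mills_left_numerator_pos (mu t : R) : mu <> 0 -> - Rabs mu <= t <= 0 ->
  0 < 1 + (2 * mu - exp (- Rabs mu)) * exp (- t) * (t + mu + 1).
Proof.
  intros Hmu Ht. assert (E := exp_pos (- t)).
  destruct (Rcase_abs mu) as [Hneg | Hpos].
  - rewrite Rabs_left in * by lra. rewrite Ropp_involutive.
    assert (A := exp_pos mu).
    destruct (Rle_dec (t + mu + 1) 0) as [Hc | Hc].
    { assert (0 <= exp (- t) * - (t + mu + 1)) by (apply Rmult_le_pos; lra). nra. }
    (* Both [e^-t (t + mu + 1) <= 1 + mu] and [(2 mu - e^mu) (1 + mu) > -1]
       follow from [(1 - s) e^s <= 1], at [s = -t] and [s = mu]. *)
    assert (Et : (1 - - t) * exp (- t) <= 1) by apply one_sub_mul_exp_le.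
    assert (Emu : (1 - mu) * exp mu < 1) by (apply one_sub_mul_exp_lt; exact Hmu).
    assert (Hmt : 0 <= mu * t * exp (- t)) by (apply Rmult_le_pos; nra).
    assert (Hx : exp (- t) * (t + mu + 1) <= 1 + mu) by nra.
    assert (Hc1 : (2 * mu - exp mu) * (1 + mu) * (1 - mu) > - (1 - mu)) by nra.
    assert (Hc2 : (2 * mu - exp mu) * (1 + mu) > -1) by nra.
    assert (Hx0 : 0 < exp (- t) * (t + mu + 1)) by (apply Rmult_lt_0_compat; lra).
    nra.
  - rewrite Rabs_pos_eq in * by lra.
    assert (Et : (1 - - (t + mu)) * exp (- (t + mu)) <= 1) by apply one_sub_mul_exp_le.
    rewrite Ropp_plus_distr, exp_plus in Et.
    assert (0 < mu * (exp (- t) * (t + mu + 1)))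
      by (apply Rmult_lt_0_compat; [lra | apply Rmult_lt_0_compat; lra]).
    nra.
Qed.

Lemma sslud_mills_right_numerator_nonneg (mu t : R) :
  0 <= 1 + exp (t - Rabs mu) * (t + mu - 1).
Proof.
  assert (Es := one_sub_mul_exp_le (t - Rabs mu)).
  assert (E := exp_pos (t - Rabs mu)).
  assert (Hmu := Rle_abs (- mu)). rewrite Rabs_Ropp in Hmu.
  nra.
Qed.

Lemma sslud_mills_left_antitone (mu x y : R) : mu <> 0 -> - Rabs mu <= x -> x <> - mu ->
  x <= y <= 0 -> sslud_mills_left mu y <= sslud_mills_left mu x.
Proof.
  intros Hmu Hx Hxm Hy.
  assert (Hne : forall t, x <= t <= y -> t + mu <> 0).
  { intros t Ht. destruct (Rcase_abs mu);
      [rewrite Rabs_left in Hx | rewrite Rabs_pos_eq in Hx]; lra. }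
  apply (antitone_of_derive_nonpos _ (fun t =>
    - ((1 + (2 * mu - exp (- Rabs mu)) * exp (- t) * (t + mu + 1)) / (t + mu)²)));
    [lra | |].
  - intros t Ht. unfold sslud_mills_left, Rsqr.
    auto_derive; [now apply Hne | field; now apply Hne].
  - intros t Ht. apply Ropp_le_cancel. rewrite Ropp_0, Ropp_involutive.
    apply Rdiv_le_0_compat.
    + left. apply sslud_mills_left_numerator_pos; lra.
    + apply Rsqr_pos_lt, Hne, Ht.
Qed.

Lemma sslud_mills_right_antitone (mu x y : R) : 0 <= x -> x <= y -> y <= Rabs mu ->
  y <> - mu -> sslud_mills_right mu y <= sslud_mills_right mu x.
Proof.
  intros Hx Hxy Hy Hym.
  assert (Hne : forall t, x <= t <= y -> t + mu <> 0).
  { intros t Ht. destruct (Rcase_abs mu);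
      [rewrite Rabs_left in Hy | rewrite Rabs_pos_eq in Hy]; lra. }
  apply (antitone_of_derive_nonpos _ (fun t =>
    - ((1 + exp (t - Rabs mu) * (t + mu - 1)) / (t + mu)²))); [lra | |].
  - intros t Ht. unfold sslud_mills_right, Rsqr.
    auto_derive; [now apply Hne |].
    replace (t + - Rabs mu) with (t - Rabs mu) by ring.
    field. now apply Hne.
  - intros t Ht. apply Ropp_le_cancel. rewrite Ropp_0, Ropp_involutive.
    apply Rdiv_le_0_compat.
    + apply sslud_mills_right_numerator_nonneg.
    + apply Rsqr_pos_lt, Hne, Ht.
Qed.

Lemma sslud_hazard_nondecreasing_mid (mu : R) : mu <> 0 ->
  nondecreasing_on
    (fun t => 0 < sslud_reliability mu t /\ - Rabs mu <= t <= Rabs mu /\ t <> - mu)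
    (sslud_hazard mu).
Proof.
  intros Hmu. assert (Habs := Rabs_pos mu).
  apply nondecreasing_on_glue with 0.
  - repeat split; [apply sslud_reliability_zero_pos, Hmu | lra | lra | lra].
  - intros x y ((Sx & Hx & Hxm) & Hx0) ((Sy & Hy & Hym) & Hy0) Hxy.
    rewrite !sslud_hazard_left by (auto; lra).
    apply Rinv_le_contravar.
    + apply sslud_mills_left_pos; auto; lra.
    + apply sslud_mills_left_antitone; auto; lra.
  - intros x y ((Sx & Hx & Hxm) & Hx0) ((Sy & Hy & Hym) & Hy0) Hxy.
    rewrite !sslud_hazard_right by (auto; lra).
    apply Rinv_le_contravar.
    + apply sslud_mills_right_pos; auto; lra.
    + apply sslud_mills_right_antitone; auto; lra.
Qed.

Lemma sslud_hazard_nondecreasing_pos (mu : R) : 0 < mu ->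
  nondecreasing_on (fun t => 0 < sslud_reliability mu t) (sslud_hazard mu).
Proof.
  intros Hmu. assert (Habs : Rabs mu = mu) by (apply Rabs_pos_eq; lra).
  apply nondecreasing_on_glue with (- mu).
  - rewrite (sslud_reliability_of_is_RInt_gen _ _ _
               (is_RInt_gen_sslud_left mu (- mu) ltac:(lra) ltac:(rewrite Habs; lra))).
    unfold sslud_rel_left. rewrite Habs.
    replace ((2 * mu - exp (- mu) - exp (- mu) * (- mu + mu - 1)) / (2 * mu)) with 1
      by (field; lra).
    lra.
  - intros x y (_ & Hx) (_ & Hy) _. rewrite !sslud_hazard_below_pos by lra. lra.
  - apply nondecreasing_on_glue with mu.
    + split; [| lra].
      rewrite (sslud_reliability_of_is_RInt_gen _ _ _
                 (is_RInt_gen_sslud_above_pos mu mu Hmu (Rle_refl mu))).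
      apply exp_pos.
    + intros x y ((Sx & Hx) & Hx') ((Sy & Hy) & Hy') Hxy.
      (* At [-mu] the density vanishes and the Mills ratio is undefined. *)
      destruct (Req_dec x (- mu)) as [-> | Hxm].
      * rewrite sslud_hazard_below_pos by lra. now apply sslud_hazard_nonneg.
      * apply (sslud_hazard_nondecreasing_mid mu); rewrite ?Habs; repeat split; auto; lra.
    + intros x y (_ & Hx) (_ & Hy) _. rewrite !sslud_hazard_above_pos by lra. lra.
Qed.

Lemma sslud_hazard_nondecreasing_neg (mu : R) : mu < 0 ->
  nondecreasing_on (fun t => 0 < sslud_reliability mu t) (sslud_hazard mu).
Proof.
  intros Hmu. assert (Habs : Rabs mu = - mu) by (apply Rabs_left; lra).
  assert (Hsupp : forall t, 0 < sslud_reliability mu t -> t < - mu).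
  { intros t Ht. destruct (Rlt_le_dec t (- mu)) as [| Hge]; [assumption |].
    rewrite (sslud_reliability_of_is_RInt_gen _ _ _
               (is_RInt_gen_sslud_above_neg mu t Hmu Hge)) in Ht. lra. }
  apply nondecreasing_on_glue with mu.
  - rewrite sslud_reliability_below_neg by lra.
    assert (H := exp_increasing mu 0 Hmu). rewrite exp_0 in H. lra.
  - intros x y (_ & Hx) (_ & Hy) Hxy. rewrite !sslud_hazard_below_neg by lra.
    assert (H := exp_increasing 0 (- y) ltac:(lra)). rewrite exp_0 in H.
    apply Rinv_le_contravar; [lra |].
    destruct (Rle_lt_or_eq _ _ Hxy) as [Hlt | ->]; [| lra].
    assert (exp (- y) < exp (- x)) by (apply exp_increasing; lra). lra.
  - apply nondecreasing_on_subset with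
      (fun t => 0 < sslud_reliability mu t /\ - Rabs mu <= t <= Rabs mu /\ t <> - mu).
    + intros t (St & Ht). assert (Hsupp' := Hsupp t St). rewrite Habs.
      repeat split; auto; lra.
    + apply sslud_hazard_nondecreasing_mid. lra.
Qed.

Lemma sslud_hazard_nondecreasing (mu : R) : mu <> 0 ->
  nondecreasing_on (fun t => 0 < sslud_reliability mu t) (sslud_hazard mu).
Proof.
  intros Hmu. destruct (Rlt_or_le 0 mu).
  - now apply sslud_hazard_nondecreasing_pos.
  - apply sslud_hazard_nondecreasing_neg. lra.
Qed.

Theorem mainTheorem6 :
  (forall mu : R, 0 < mu ->
     forall x : R,
       (x < - mu -> sslud_hazard mu x = 0) /\
       (x = - mu -> sslud_hazard mu x = 0) /\
       (- mu < x < 0 ->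
          sslud_hazard mu x =
          / (-1 + (1 + (2 * mu - exp (- mu)) * exp (- x)) / (x + mu))) /\
       (0 <= x < mu ->
          sslud_hazard mu x = / (1 + (1 - exp (x - mu)) / (x + mu))) /\
       (mu <= x -> sslud_hazard mu x = 1)) /\
  (forall mu : R, mu <> 0 ->
     forall x y : R,
       0 < sslud_reliability mu x -> 0 < sslud_reliability mu y -> x <= y ->
       sslud_hazard mu x <= sslud_hazard mu y).
Proof.
  split.
  - intros mu Hmu x. assert (Habs : Rabs mu = mu) by (apply Rabs_pos_eq; lra).
    repeat split; intros Hx.
    + apply sslud_hazard_below_pos; lra.
    + apply sslud_hazard_below_pos; lra.
    + rewrite sslud_hazard_left by (rewrite ?Habs; lra).
      unfold sslud_mills_left. now rewrite Habs.
    + rewrite sslud_hazard_right by (rewrite ?Habs; lra).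
      unfold sslud_mills_right. now rewrite Habs.
    + now apply sslud_hazard_above_pos.
  - intros mu Hmu x y. apply (sslud_hazard_nondecreasing mu Hmu).
Qed.
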